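(* Let $\mathbf{q}$ be any point on the line $\mathcal{L}$ satisfying $q_{\min} \leq q_{d} \leq q_{\max}$, and define \[ \mu(\mathbf{q}) := 1-\frac{(q_d-q_{\min})(1-\overline{\mu})}{q_{\max}-q_{\min}} ~. \] Then $\mu(\mathbf{q})\geq\overline{\mu}$, and the reduced convex hull of $\mathcal{P}^-$ is exactly equal to the following non-empty line segment of $\mathcal{L}$: \[ \mathrm{conv}_{\mu(\mathbf{q})}(\mathcal{P}^-) = \left[\mathbf{q},\mathbf{u}_{\mathrm{left}}+\mathbf{u}_{\mathrm{right}}-\mathbf{q}\right] \subseteq \{\mathbf{x}\in\mathcal{L} : x_d \geq q_{d}\} . \]
   Context: Let $\mathcal{S}:=\{\mathbf{x}\in\mathbb{R}^d: x_1=\ldots=x_{d-2}=0\}$ and $\mathcal{L}:=\{(0,\ldots,0,2,y)^T:y\in\mathbb{R}\}\subseteq\mathcal{S}$. For a finite point set $\mathcal{P}$ and $\frac{1}{|\mathcal{P}|}\le\mu\le1$, the reduced convex hull is $\mathrm{conv}_\mu(\mathcal{P}):=\{\sum_{p\in\mathcal{P}}\alpha_p p: 0\le\alpha_p\le\mu,\ \sum_p\alpha_p=1\}$. In the construction, $\overline{\mu}$ is a constant with $\frac12\le\overline{\mu}<1$ (defined as $\max\{\frac12,\max_{\sigma}\mu_\sigma^{(\delta)}\}$, the maximum over $\sigma\in\{-1,1\}^d$ with $\sigma_{d-1}=\sigma_d=1$ of the largest coefficient in the unique convex combination of the point $\mathbf{p}_\sigma^{(\delta)}$ in terms of vertices of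 the stretched dual Goldfarb cube), and $q_{\min}<q_{\max}$ are finite reals (the minimum and maximum of the last coordinates $q_{\sigma,d}$ of the constructed points $\mathbf{q}_\sigma\in\mathcal{L}$ over those $\sigma$). The second point class is $\mathcal{P}^-:=\{\mathbf{u}_{\mathrm{left}},\mathbf{u}_{\mathrm{right}}\}$ with $\mathbf{u}_{\mathrm{left}}:=(0,\ldots,0,2,q_{\min})^T$ and $\mathbf{u}_{\mathrm{right}}:=(0,\ldots,0,2,q_{\min}+\frac{q_{\max}-q_{\min}}{1-\overline{\mu}})^T$. *)

From mathcomp Require Import all_boot all_order all_algebra.
Set Implicit Arguments. Unset Strict Implicit. Unset Printing Implicit Defensive.
Import Order.TTheory GRing.Theory Num.Theory.
Local Open Scope ring_scope.

(* Ambient dimension d = n.+2 (so d >= 2); points are row vectors 'rV[R]_d.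
   Coordinates are 0-indexed: x_d is index ord_max = d-1, x_{d-1} is index n = d-2. *)

Section Defs.
Variable R : realFieldType.
Variable n : nat.
Local Notation V := 'rV[R]_(n.+2).

Definition xcoord (x : V) (k : nat) : R := x 0 (inord k.-1).

Definition pt2 (a b : R) : V :=
  \row_(i < n.+2) (if val i == n.+1 then b else if val i == n then a else 0).

Definition inS (x : V) : Prop := forall k : 'I_(n.+2), (k < n)%N -> x 0 k = 0.
Definition inL (x : V) : Prop := exists y : R, x = pt2 2 y.

(* reduced convex hull of a finite point set P (given by a list; duplicates ignored) *)
Definition conv_mu (P : seq V) (mu : R) (x : V) : Prop :=
  exists alpha : V -> R,
    [/\ forall p, p \in P -> 0 <= alpha p <= mu,
        \sum_(p <- undup P) alpha p = 1
      & x = \sum_(p <- undup P) alpha p *: p].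

Definition segment (a b : V) (x : V) : Prop :=
  exists t : R, 0 <= t <= 1 /\ x = (1 - t) *: a + t *: b.

Definition u_left (qmin : R) : V := pt2 2 qmin.
Definition u_right (mubar qmin qmax : R) : V :=
  pt2 2 (qmin + (qmax - qmin) / (1 - mubar)).
Definition Pminus (mubar qmin qmax : R) : seq V :=
  [:: u_left qmin; u_right mubar qmin qmax].

Definition mu_q (mubar qmin qmax : R) (q : V) : R :=
  1 - (xcoord q n.+2 - qmin) * (1 - mubar) / (qmax - qmin).

End Defs.

From mathcomp Require Import all_boot all_order all_algebra.
From mathcomp Require Import ring lra.
Import Order.TTheory GRing.Theory Num.Theory.
Local Open Scope ring_scope.

Set Implicit Arguments.
Unset Strict Implicit.

(* Both points of P^- lie on L, so conv_mu(P^-) is the set of s u_left + (1-s) u_right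
   with 1 - mu <= s <= mu, i.e. the segment between the combinations with weights mu and
   1 - mu, which are exchanged by the reflection x |-> u_left + u_right - x.  The choice
   of mu(q) makes q the combination with weight mu on u_left. *)

Section ConvexCombinations.
Variables (R : realFieldType) (V : lmodType R).
Implicit Types (a b : V) (s t : R).

Lemma comb2_comb2 a b s1 s2 t :
  (1 - t) *: (s1 *: a + (1 - s1) *: b) + t *: (s2 *: a + (1 - s2) *: b) =
  ((1 - t) * s1 + t * s2) *: a + (1 - ((1 - t) * s1 + t * s2)) *: b.
Proof.
rewrite !scalerDr !scalerA addrACA -!scalerDl.
by congr (_ *: _ + _ *: _); ring.
Qed.

Lemma addr_sub_comb2 a b s :
  a + b - (s *: a + (1 - s) *: b) = (1 - s) *: a + (1 - (1 - s)) *: b.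
Proof.
rewrite -{1}[a]scale1r -{1}[b]scale1r opprD -!scaleNr addrACA -!scalerDl.
by congr (_ *: _ + _ *: _); ring.
Qed.

Lemma ler_comb2 (y1 y2 s t : R) : y1 <= y2 -> s <= t ->
  t * y1 + (1 - t) * y2 <= s * y1 + (1 - s) * y2.
Proof.
move=> y12 st; rewrite -subr_ge0.
have -> : s * y1 + (1 - s) * y2 - (t * y1 + (1 - t) * y2) = (t - s) * (y2 - y1) by ring.
by apply: mulr_ge0; rewrite subr_ge0.
Qed.

End ConvexCombinations.

Section TwoPoints.
Variables (R : realFieldType) (n : nat).
Local Notation V := 'rV[R]_(n.+2).
Implicit Types (a b x : V) (mu s : R).

Lemma conv_mu_pairP a b mu x : a != b -> mu <= 1 ->
  conv_mu [:: a; b] mu x <->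
  exists2 s, 1 - mu <= s <= mu & x = s *: a + (1 - s) *: b.
Proof.
move=> ab mu_le1.
have undup_ab : undup [:: a; b] = [:: a; b] by rewrite /= inE (negbTE ab).
rewrite /conv_mu undup_ab; split.
- case=> alpha [alpha_bd]; rewrite !big_cons !big_nil !addr0 => alpha_sum ->.
  have /andP[a0 a1] := alpha_bd a (mem_head _ _).
  have /andP[b0 b1] := alpha_bd b (mem_last _ [:: b]).
  have -> : alpha b = 1 - alpha a by rewrite -alpha_sum addrC addKr.
  by exists (alpha a); [apply/andP; split; lra|].
- case=> s /andP[s_ge s_le] ->.
  have ba : (b == a) = false by rewrite eq_sym (negbTE ab).
  exists (fun p => if p == a then s else 1 - s); split.
  + by move=> p; rewrite !inE => /orP[] /eqP->; rewrite ?eqxx ?ba; apply/andP; split; lra.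
  + by rewrite !big_cons !big_nil eqxx ba addr0 addrC subrK.
  + by rewrite !big_cons !big_nil eqxx ba addr0.
Qed.

Lemma segment_comb2P a b s1 s2 x : s2 <= s1 ->
  segment (s1 *: a + (1 - s1) *: b) (s2 *: a + (1 - s2) *: b) x <->
  exists2 s, s2 <= s <= s1 & x = s *: a + (1 - s) *: b.
Proof.
move=> s21; split.
- case=> t [/andP[t0 t1] ->]; rewrite comb2_comb2.
  by exists ((1 - t) * s1 + t * s2); [apply/andP; split; nra|].
- case=> s /andP[s_ge s_le] ->.
  have [s_eq|s_lt] := eqVneq s1 s2.
  + exists 0; split; first by rewrite lexx ler01.
    by rewrite subr0 scale1r scale0r addr0; congr (_ *: _ + (1 - _) *: _); lra.
  + have s12 : 0 < s1 - s2 by rewrite subr_gt0 lt_def s_lt.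
    exists ((s1 - s) / (s1 - s2)); split.
      by apply/andP; split; [apply: divr_ge0; lra | rewrite ler_pdivrMr //; lra].
    rewrite comb2_comb2; congr (_ *: _ + (1 - _) *: _); field; lra.
Qed.

Lemma segment_left a b : segment a b a.
Proof.
by exists 0; split; [rewrite lexx ler01 | rewrite subr0 scale1r scale0r addr0].
Qed.

Lemma xcoord_pt2 (y1 y2 : R) : xcoord (pt2 n y1 y2) n.+2 = y2.
Proof. by rewrite /xcoord mxE /= inordK // eqxx. Qed.

Lemma comb2_pt2 s (x1 y1 x2 y2 : R) :
  s *: pt2 n x1 y1 + (1 - s) *: pt2 n x2 y2 =
  pt2 n (s * x1 + (1 - s) * x2) (s * y1 + (1 - s) * y2).
Proof.
apply/rowP => i; rewrite !mxE.
by case: ifP => // _; case: ifP => // _; rewrite !mulr0 addr0.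
Qed.

End TwoPoints.

Section MuQ.
Variables (R : realFieldType) (n : nat) (mubar qmin qmax y : R).
Hypotheses (mubar_lt1 : mubar < 1) (qmin_lt : qmin < qmax).
Hypotheses (y_ge : qmin <= y) (y_le : y <= qmax).
Local Notation mu := (mu_q mubar qmin qmax (pt2 n 2 y)).

Lemma mu_q_pt2 : mu = 1 - (y - qmin) * (1 - mubar) / (qmax - qmin).
Proof. by rewrite /mu_q xcoord_pt2. Qed.

Lemma mu_q_ge : mubar <= mu.
Proof.
rewrite mu_q_pt2.
suff : (y - qmin) * (1 - mubar) / (qmax - qmin) <= 1 - mubar by lra.
rewrite ler_pdivrMr ?subr_gt0 // mulrC.
by apply: ler_wpM2l; [rewrite subr_ge0 ltW | rewrite lerD2r].
Qed.

Lemma mu_q_le1 : mu <= 1.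
Proof.
by rewrite mu_q_pt2 gerBl divr_ge0 ?mulr_ge0 ?subr_ge0 ?(ltW mubar_lt1) ?(ltW qmin_lt).
Qed.

(* [1 - mu(q)] is the fraction of [u_right - u_left] travelled to reach [q]. *)
Lemma pt2_mu_q_comb :
  pt2 n 2 y = mu *: u_left n qmin + (1 - mu) *: u_right n mubar qmin qmax.
Proof.
rewrite comb2_pt2 mu_q_pt2; congr pt2; first by ring.
by field; rewrite !subr_eq0 !gt_eqF.
Qed.

End MuQ.

Theorem lemma6 (R : realFieldType) (n : nat) (mubar qmin qmax : R)
  (hmu1 : 1 / 2 <= mubar) (hmu2 : mubar < 1) (hq : qmin < qmax)
  (q : 'rV[R]_(n.+2))
  (hqL : inL q) (hq1 : qmin <= xcoord q n.+2) (hq2 : xcoord q n.+2 <= qmax) :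
  mubar <= mu_q mubar qmin qmax q /\
  (forall x : 'rV[R]_(n.+2),
     conv_mu (Pminus n mubar qmin qmax) (mu_q mubar qmin qmax q) x <->
     segment q (u_left n qmin + u_right n mubar qmin qmax - q) x) /\
  (exists x, segment q (u_left n qmin + u_right n mubar qmin qmax - q) x) /\
  (forall x : 'rV[R]_(n.+2),
     segment q (u_left n qmin + u_right n mubar qmin qmax - q) x ->
     inL x /\ xcoord q n.+2 <= xcoord x n.+2).
Proof.
case: hqL => y ->{q} in hq1 hq2 *; rewrite xcoord_pt2 in hq1 hq2.
have mu_ge := mu_q_ge n hmu2 hq hq2.
have mu_le1 := mu_q_le1 n hmu2 hq hq1.
have q_comb := pt2_mu_q_comb n y hmu2 hq.
set mu := mu_q _ _ _ _ in mu_ge mu_le1 q_comb *.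
have K_gt0 : 0 < (qmax - qmin) / (1 - mubar) by rewrite divr_gt0 // subr_gt0.
rewrite q_comb addr_sub_comb2; split=> //; split; [|split].
- move=> x; rewrite segment_comb2P; last lra.
  apply: conv_mu_pairP => //; apply/eqP => /(congr1 (fun p => xcoord p n.+2)).
  by rewrite !xcoord_pt2; lra.
- by eexists; apply: segment_left.
- move=> x /segment_comb2P [|s /andP[_ s_le] ->]; first lra.
  rewrite !comb2_pt2 !xcoord_pt2; split; first by eexists; congr pt2; ring.
  by apply: ler_comb2 => //; lra.
Qed.
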